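(* Let $1\le k\le n$ and let $\mathcal{C}$ be any linear storage code (with any sub-packetization $\alpha\ge 1$ and generator matrix of rank $k\alpha$) on a storage network with node set $\mathcal{N}=\{1,\dots,n\}$ and symmetric round-trip-time function $\tau$. Then for every node $i\in\mathcal{N}$, \[ L_{max}^{(i)}(\mathcal{C}) \ge \lambda_{k-1}^{(i)}, \] and the average latency satisfies \[ L_{avg}(\mathcal{C}) \ge \frac{1}{kn}\sum_{i\in\mathcal{N}}\sum_{j=0}^{k-1}\lambda_{j}^{(i)}. \]
   Context: A storage network consists of $n$ nodes $\mathcal{N}=\{1,\dots,n\}$ and a round-trip-time (RTT) function $\tau:\mathcal{N}\times\mathcal{N}\to\mathbb{R}_{\ge 0}$ with $\tau(i,j)=\tau(j,i)$ and $\tau(i,i)=0$. There are $k\le n$ information files $W_1,\dots,W_k$, each consisting of $\alpha$ sub-packets in a finite field $\mathcal{F}$; node $i$ stores $X_i\in\mathcal{F}^\alpha$. A linear storage code $\mathcal{C}$ is given by a $(k\alpha\times n\alpha)$ matrix $G$ over $\mathcal{F}$ of rank $k\alpha$ with $\underline{X}^T=\underline{W}^T G$, where $\underline{X}$ and $\underline{W}$ are the concatenations of all sub-packets of $X_1,\dots,X_n$ and $W_1,\dots,W_k$. File $W_j$ is decodable from a set $S\subseteq\mathcal{N}$ if there is a function $\varphi$ with $\varphi((X_t)_{t\in S})=W_j$ for all choices of the files. The latency of node $i$ for file $W_j$ is $l_j^{(i)}=\min\{L\ge 0: W_j \text{ is decodable from } \{t\in\mathcal{N}:\tau(t,i)\le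 L\}\}$. The per-node worst-case latency is $L_{max}^{(i)}(\mathcal{C})=\max_{j\in[k]} l_j^{(i)}$ and the average latency is $L_{avg}(\mathcal{C})=\frac{1}{kn}\sum_{i\in\mathcal{N}}\sum_{j\in[k]} l_j^{(i)}$. For node $i$, $\lambda_0^{(i)}\le\lambda_1^{(i)}\le\dots\le\lambda_{n-1}^{(i)}$ denotes the multiset $\{\tau(j,i):j\in\mathcal{N}\}$ sorted in ascending order (so $\lambda_0^{(i)}=0$). *)

From HB Require Import structures.
From mathcomp Require Import all_boot all_order all_algebra all_field.
From mathcomp Require Import classical_sets reals.
Set Implicit Arguments. Unset Strict Implicit. Unset Printing Implicit Defensive.
Import Order.TTheory GRing.Theory Num.Theory.
Local Open Scope ring_scope.

Section StorageCode.
Variables (F : finFieldType) (R : realType) (n k alpha : nat).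

(* Nodes are 'I_n (node t <-> paper's node t+1), files are 'I_k.
   W : 'rV_(k*alpha) is the concatenation of W_1,...,W_k, sub-packet s of file j
   sitting at position j*alpha + s (= mxvec_index j s); same for X. *)

Definition file (W : 'rV[F]_(k * alpha)) (j : 'I_k) : 'rV[F]_alpha :=
  \row_(s < alpha) W 0 (mxvec_index j s).

Definition stored (G : 'M[F]_(k * alpha, n * alpha)) (W : 'rV[F]_(k * alpha))
    (t : 'I_n) : 'rV[F]_alpha :=
  \row_(s < alpha) (W *m G) 0 (mxvec_index t s).

(* W_j is decodable from S: some function of (X_t)_{t in S} returns W_j for
   all choices of the files.  The tuple (X_t)_{t in S} is encoded as the map
   t |-> X_t for t in S, and 0 for t outside S. *)
Definition decodable (G : 'M[F]_(k * alpha, n * alpha)) (S : {set 'I_n})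
    (j : 'I_k) : Prop :=
  exists phi : ('I_n -> 'rV[F]_alpha) -> 'rV[F]_alpha,
    forall W : 'rV[F]_(k * alpha),
      phi (fun t => if t \in S then stored G W t else 0) = file W j.

(* l_j^(i) = min { L >= 0 : W_j decodable from {t : tau(t,i) <= L} }
   (the minimum exists; we take the infimum, which then coincides with it) *)
Definition latency (tau : 'I_n -> 'I_n -> R) (G : 'M[F]_(k * alpha, n * alpha))
    (i : 'I_n) (j : 'I_k) : R :=
  inf [set L : R | 0 <= L /\ decodable G [set t | tau t i <= L] j].

(* L_max^(i) = max_j l_j^(i)  (latencies are >= 0 and k >= 1) *)
Definition Lmax (tau : 'I_n -> 'I_n -> R) (G : 'M[F]_(k * alpha, n * alpha))
    (i : 'I_n) : R :=
  \big[Num.max/0]_(j < k) latency tau G i j.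

Definition Lavg (tau : 'I_n -> 'I_n -> R) (G : 'M[F]_(k * alpha, n * alpha)) : R :=
  ((k * n)%:R)^-1 * \sum_(i < n) \sum_(j < k) latency tau G i j.

End StorageCode.

Definition lambda (R : realType) (n : nat) (tau : 'I_n -> 'I_n -> R)
    (i : 'I_n) (m : nat) : R :=
  nth 0 (sort (fun x y : R => x <= y) [seq tau t i | t <- enum 'I_n]) m.

From HB Require Import structures.
From mathcomp Require Import all_boot all_order all_algebra all_field.
From mathcomp Require Import classical_sets reals.
From mathcomp Require Import boolp zify.
Set Implicit Arguments. Unset Strict Implicit. Unset Printing Implicit Defensive.
Import Order.TTheory GRing.Theory Num.Theory.
Local Open Scope ring_scope.

(* If the files indexed by J can all be decoded from the nodes in S, the map
   sending the files (supported on J) to the contents of S is injective, so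
   #|F|^(alpha #|J|) <= #|F|^(alpha #|S|), i.e. #|J| <= #|S|.  At node i, every
   file of latency < lambda_m is decodable from the nodes at RTT < lambda_m,
   and there are at most m of those; hence at most m latencies lie below
   lambda_m, so the m-th smallest latency at i is at least lambda_m.  Taking
   m = k - 1 bounds the largest latency, summing over m bounds the average. *)

Lemma count_lt_nth_sort d (T : orderType d) (x0 : T) (s : seq T) (m : nat) :
  (m < size s)%N -> (count (< nth x0 (sort <=%O s) m)%O s <= m)%N.
Proof.
move=> ms; rewrite -(count_sort <=%O) leqNgt; apply/negP.
by move/(nth_count_lt x0 (sort_le_sorted s)); rewrite ltxx.
Qed.

Lemma ler_sum_count (R : realDomainType) (s : seq R) (b : nat -> R) :
  (forall m, (m < size s)%N -> (count (< b m)%O s <= m)%N) ->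
  \sum_(m < size s) b m <= \sum_(x <- s) x.
Proof.
move=> count_b; rewrite -(perm_big _ (permEl (perm_sort <=%O s))) (big_nth 0).
rewrite size_sort big_mkord; apply: ler_sum => m _.
apply: nth_count_ge; first exact: sort_le_sorted.
by rewrite count_sort size_sort ltn_ord andbT; apply: count_b.
Qed.

Lemma card_set_count (T : finType) (P : pred T) :
  #|[set t | P t]| = count P (enum T).
Proof.
rewrite cardE /enum_mem size_filter count_filter.
by apply: eq_count => t; rewrite !inE andbT.
Qed.

Section Decoding.
Variables (F : finFieldType) (n k alpha : nat) (G : 'M[F]_(k * alpha, n * alpha)).

Lemma decodable_subset (S1 S2 : {set 'I_n}) j :
  S1 \subset S2 -> decodable G S1 j -> decodable G S2 j.
Proof.
move=> sub12 [phi dec]; exists (fun x => phi (fun t => if t \in S1 then x t else 0)).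
move=> W; rewrite -dec; congr phi; apply: funext => t.
by case: ifP => // tS1; rewrite (fintype.subsetP sub12 t tS1).
Qed.

Lemma decodable_setT j : row_free G -> decodable G [set: 'I_n] j.
Proof.
move=> freeG; exists (fun x => file (mxvec (\matrix_(t, s) x t 0 s) *m pinvmx G) j).
move=> W; have -> : mxvec (\matrix_(t, s)
    (if t \in [set: 'I_n] then stored G W t else 0) 0 s) = W *m G.
  apply/rowP => c; case/mxvec_indexP: c => t s.
  by rewrite mxvecE mxE inE /stored mxE.
by congr file; apply: (row_free_inj freeG); rewrite /= mulmxKpV ?submxMl.
Qed.

Lemma decodable_file_eq (S : {set 'I_n}) j W1 W2 :
  decodable G S j -> {in S, forall t, stored G W1 t = stored G W2 t} ->
  file W1 j = file W2 j.
Proof.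
case=> phi dec eq_S; rewrite -!dec; congr phi; apply: funext => t.
by case: ifP => // /eq_S.
Qed.

Definition files_row (h : {ffun 'I_k -> 'rV[F]_alpha}) : 'rV[F]_(k * alpha) :=
  mxvec (\matrix_(j, s) h j 0 s).

Lemma file_files_row h j : file (files_row h) j = h j.
Proof. by apply/rowP => s; rewrite !mxE mxvecE mxE. Qed.

Lemma card_decodable (S : {set 'I_n}) (J : {set 'I_k}) : (0 < alpha)%N ->
  (forall j, j \in J -> decodable G S j) -> (#|J| <= #|S|)%N.
Proof.
move=> alpha_gt0 decJ.
pose enc h := [ffun t => if t \in S then stored G (files_row h) t else 0].
have enc_inj : {in pffun_on 0 J predT &, injective enc}.
  move=> h1 h2 /pffun_onP[supp1 _] /pffun_onP[supp2 _] enc12; apply/ffunP => j.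
  have [jJ | jNJ] := boolP (j \in J).
    rewrite -!file_files_row; apply: decodable_file_eq (decJ j jJ) _ => t tS.
    by move/ffunP/(_ t): enc12; rewrite !ffunE tS.
  have out0 (h : {ffun 'I_k -> 'rV[F]_alpha}) : support h \subset J -> h j = 0.
    by move/fintype.subsetP/(_ j)/contraNN/(_ jNJ)/negbNE/eqP.
  by rewrite (out0 h1) // (out0 h2).
have enc_on : enc @: pffun_on 0 J predT \subset pffun_on 0 S predT.
  apply/fintype.subsetP => _ /imsetP[h _ ->]; apply/pffun_onP; split => //.
  by apply/fintype.subsetP => t; rewrite inE ffunE; case: ifP; rewrite ?eqxx.
have := subset_leq_card enc_on; rewrite (card_in_imset enc_inj) !card_pffun_on.
rewrite leq_exp2l // cardT -cardE card_mx mul1n -{1}(expn0 #|F|).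
by rewrite ltn_exp2l // card_finNzRing_gt1.
Qed.

End Decoding.

Section Latency.
Variables (F : finFieldType) (R : realType) (n k alpha : nat).
Variables (tau : 'I_n -> 'I_n -> R) (G : 'M[F]_(k * alpha, n * alpha)).
Hypothesis tau_ge0 : forall i j, 0 <= tau i j.
Hypothesis freeG : row_free G.
Hypothesis alpha_gt0 : (0 < alpha)%N.

Lemma latency_has_inf i j :
  has_inf [set L : R | 0 <= L /\ decodable G [set t | tau t i <= L] j].
Proof.
split; last by exists 0 => L [].
exists (\sum_t tau t i); split; first exact: sumr_ge0.
apply: decodable_subset (decodable_setT j freeG).
by apply/fintype.subsetP => t _; rewrite inE (bigD1 t) //= lerDl sumr_ge0.
Qed.

Lemma decodable_gt_latency i j x :
  latency tau G i j < x -> decodable G [set t | tau t i < x] j.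
Proof.
move=> lat_x; rewrite -subr_gt0 in lat_x.
have [L [_ decL] L_lt] := inf_adherent lat_x (latency_has_inf i j).
apply: decodable_subset decL; apply/fintype.subsetP => t; rewrite !inE => tau_L.
by apply: le_lt_trans tau_L _; rewrite addrC subrK in L_lt.
Qed.

Lemma card_latency_lt i (x : R) :
  (#|[set j | (latency tau G i j < x)%R]| <= #|[set t | (tau t i < x)%R]|)%N.
Proof.
apply: (card_decodable (G := G) alpha_gt0) => j.
by rewrite inE; apply: decodable_gt_latency.
Qed.

Lemma count_latency_lt_lambda i m : (m < n)%N ->
  (count (< lambda tau i m)%O [seq latency tau G i j | j <- enum 'I_k] <= m)%N.
Proof.
move=> mn; rewrite count_map -card_set_count.
apply: leq_trans (card_latency_lt i _) _.
have := count_lt_nth_sort 0 (s := [seq tau t i | t <- enum 'I_n]) (m := m).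
by rewrite card_set_count count_map size_map size_enum_ord; apply.
Qed.

End Latency.

Theorem proposition1 (F : finFieldType) (R : realType) (n k alpha : nat)
    (hk1 : (1 <= k)%N) (hkn : (k <= n)%N) (halpha : (1 <= alpha)%N)
    (tau : 'I_n -> 'I_n -> R)
    (tau_ge0 : forall i j, 0 <= tau i j)
    (tau_sym : forall i j, tau i j = tau j i)
    (tau_diag : forall i, tau i i = 0)
    (G : 'M[F]_(k * alpha, n * alpha))
    (rankG : \rank G = (k * alpha)%N) :
  (forall i : 'I_n, lambda tau i k.-1 <= Lmax tau G i) /\
  ((k * n)%:R)^-1 * \sum_(i < n) \sum_(j < k) lambda tau i j <= Lavg tau G.
Proof.
have freeG : row_free G by rewrite /row_free rankG.
have count_lt := count_latency_lt_lambda tau_ge0 freeG halpha.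
split=> [i|].
  rewrite leNgt; apply/negP => Lmax_lt; have := count_lt i k.-1 ltac:(lia).
  set s := [seq latency tau G i j | j <- enum 'I_k].
  have /eqP-> : count (< lambda tau i k.-1)%O s == size s.
    rewrite -all_count; apply/allP => _ /mapP[j _ ->].
    by rewrite /= (le_lt_trans (le_bigmax _ _ j) Lmax_lt).
  by rewrite size_map size_enum_ord; lia.
rewrite /Lavg; apply: ler_wpM2l; first by rewrite invr_ge0 ler0n.
apply: ler_sum => i _; set s := [seq latency tau G i j | j <- enum 'I_k].
have size_s : size s = k by rewrite size_map size_enum_ord.
have -> : \sum_(j < k) latency tau G i j = \sum_(x <- s) x by rewrite big_map big_enum.
have -> : \sum_(j < k) lambda tau i j = \sum_(m < size s) lambda tau i m by rewrite size_s.
apply: ler_sum_count => m; rewrite size_s => mk.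
exact: count_lt i m (leq_trans mk hkn).
Qed.
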